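(* Let $\Gamma=(V,E)$ be a simple graph of order $n$ and maximum degree $\Delta$. Then the global defensive alliance number of $\Gamma$ satisfies $$\gamma_{a}(\Gamma)\ge \left\lceil \frac{2n}{\Delta+3}\right\rceil$$ and the global strong defensive alliance number of $\Gamma$ satisfies $$\gamma_{\hat{a}}(\Gamma)\ge \left\lceil \frac{n}{\left\lfloor\frac{\Delta}{2}\right\rfloor+1}\right\rceil.$$
   Context: For $S\subseteq V$ and $v\in V$, $N_S(v)=\{u\in S: u\sim v\}$ and $N_{V\setminus S}(v)=\{u\in V\setminus S: u\sim v\}$. A nonempty set $S\subseteq V$ is a defensive alliance if $|N_S(v)|+1\ge |N_{V\setminus S}(v)|$ for every $v\in S$, and a strong defensive alliance if $|N_S(v)|\ge |N_{V\setminus S}(v)|$ for every $v\in S$. A (strong) defensive alliance is global if it is a dominating set, i.e. every vertex of $V\setminus S$ is adjacent to some vertex of $S$. $\gamma_a(\Gamma)$ (resp. $\gamma_{\hat a}(\Gamma)$) is the minimum cardinality of a global defensive (resp. global strong defensive) alliance. *)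

From mathcomp Require Import all_boot all_order.
Set Implicit Arguments. Unset Strict Implicit. Unset Printing Implicit Defensive.

Definition simple_graph (T : finType) (e : rel T) : Prop :=
  symmetric e /\ irreflexive e.

Section Alliances.
Variables (T : finType) (e : rel T).

Definition nbhd_in (S : {set T}) (v : T) : {set T} := [set u in S | e u v].

Definition degree (v : T) : nat := #|[set u | e u v]|.

(* maximum degree Delta (0 for the empty graph) *)
Definition max_degree : nat := \max_(v : T) degree v.

Definition dominating (S : {set T}) : bool :=
  [forall v, (v \notin S) ==> [exists u in S, e u v]].

Definition defensive_alliance (S : {set T}) : bool :=
  (S != set0) &&
  [forall v in S, #|nbhd_in (~: S) v| <= #|nbhd_in S v| + 1].

Definition strong_defensive_alliance (S : {set T}) : bool :=
  (S != set0) &&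
  [forall v in S, #|nbhd_in (~: S) v| <= #|nbhd_in S v|].

Definition global_defensive_alliance (S : {set T}) : bool :=
  defensive_alliance S && dominating S.

Definition global_strong_defensive_alliance (S : {set T}) : bool :=
  strong_defensive_alliance S && dominating S.

(* gamma_a and gamma_{hat a}: minimum cardinality; (#|T| if no such set exists,
   which only happens for the empty graph, excluded in the theorem). *)
Definition gamma_a : nat :=
  \big[minn/#|T|]_(S : {set T} | global_defensive_alliance S) #|S|.

Definition gamma_hat_a : nat :=
  \big[minn/#|T|]_(S : {set T} | global_strong_defensive_alliance S) #|S|.

End Alliances.

Definition ceil_div (a b : nat) : nat := (a + b.-1) %/ b.

From mathcomp Require Import all_boot all_order.
From mathcomp Require Import zify.

Set Implicit Arguments. Unset Strict Implicit. Unset Printing Implicit Defensive.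

(* Double counting the edges between a dominating set S and its complement:
   every vertex outside S has a neighbour in S, while every vertex of S has at
   most k neighbours outside S, so |V \ S| <= k |S|.  In a defensive alliance a
   vertex of S has at most (Delta + 1)/2 such neighbours, in a strong one at
   most Delta/2, and |V| = |S| + |V \ S| gives the two bounds. *)

Lemma leq_big_minn (I : finType) (P : pred I) (F : I -> nat) (x0 m : nat) :
  m <= x0 -> (forall i, P i -> m <= F i) -> m <= \big[minn/x0]_(i | P i) F i.
Proof.
move=> le_m_x0 le_m_F; elim/big_ind: _ => // x y le_m_x le_m_y.
by rewrite leq_min le_m_x le_m_y.
Qed.

Lemma leq_ceil_div (a b s : nat) : 0 < b -> a <= s * b -> ceil_div a b <= s.
Proof. by move=> b_gt0 le_a_sb; rewrite /ceil_div -ltnS ltn_divLR //; lia. Qed.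

Section Counting.
Variables (T : finType) (e : rel T).

Lemma card_nbhd_inC (S : {set T}) (v : T) :
  #|nbhd_in e (~: S) v| + #|nbhd_in e S v| = degree e v.
Proof.
rewrite /degree -(cardsID S [set u | e u v]) addnC.
by congr (_ + _); apply: eq_card => u; rewrite !inE andbC.
Qed.

Lemma degree_le_max (v : T) : degree e v <= max_degree e.
Proof. exact: (leq_bigmax v). Qed.

Lemma card_nbhd_in (S : {set T}) (v : T) :
  #|nbhd_in e S v| = \sum_(u in S) (e u v : nat).
Proof.
rewrite -sum1_card big_mkcond [RHS]big_mkcond /=.
by apply: eq_bigr => u _; rewrite inE; case: (u \in S); case: (e u v).
Qed.

Lemma card_setC_dominating (S : {set T}) (k : nat) :
  symmetric e -> dominating e S ->
  (forall v, v \in S -> #|nbhd_in e (~: S) v| <= k) ->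
  #|~: S| <= #|S| * k.
Proof.
move=> e_sym /forallP dom out_le_k.
have ->: #|~: S| = \sum_(u in ~: S) 1 by rewrite sum1_card.
apply: (@leq_trans (\sum_(v in S) #|nbhd_in e (~: S) v|)); last first.
  by rewrite -sum_nat_const; apply: leq_sum.
under [X in _ <= X]eq_bigr do rewrite card_nbhd_in.
rewrite exchange_big /=; apply: leq_sum => u; rewrite inE => uNS.
have /existsP [v /andP [vS e_vu]] := implyP (dom u) uNS.
by rewrite (bigD1 v) //= e_sym e_vu leq_addr.
Qed.

Lemma card_dominating (S : {set T}) (k : nat) :
  symmetric e -> dominating e S ->
  (forall v, v \in S -> #|nbhd_in e (~: S) v| <= k) ->
  #|T| <= #|S| * k.+1.
Proof.
move=> e_sym dom out_le_k; rewrite -(cardsC S) mulnS leq_add2l.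
exact: card_setC_dominating.
Qed.

Lemma defensive_alliance_out_le (S : {set T}) :
  defensive_alliance e S -> forall v, v \in S ->
  #|nbhd_in e (~: S) v| <= (max_degree e).+1./2.
Proof.
case/andP=> _ /forall_inP all_def v vS; rewrite geq_half_double -addnn.
have := all_def v vS; have := degree_le_max v; rewrite -(card_nbhd_inC S v).
lia.
Qed.

Lemma strong_defensive_alliance_out_le (S : {set T}) :
  strong_defensive_alliance e S -> forall v, v \in S ->
  #|nbhd_in e (~: S) v| <= (max_degree e)./2.
Proof.
case/andP=> _ /forall_inP all_def v vS; rewrite geq_half_double -addnn.
have := all_def v vS; have := degree_le_max v; rewrite -(card_nbhd_inC S v).
lia.
Qed.

Lemma card_global_defensive_alliance (S : {set T}) :
  symmetric e -> global_defensive_alliance e S ->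
  2 * #|T| <= #|S| * (max_degree e + 3).
Proof.
move=> e_sym /andP [all_def dom].
have le_T := card_dominating e_sym dom (defensive_alliance_out_le all_def).
have le_k : 2 * ((max_degree e).+1./2).+1 <= max_degree e + 3.
  by have := odd_double_half (max_degree e).+1; rewrite -muln2; lia.
apply: leq_trans (leq_mul (leqnn #|S|) le_k).
by rewrite mulnCA leq_mul2l le_T orbT.
Qed.

Lemma card_global_strong_defensive_alliance (S : {set T}) :
  symmetric e -> global_strong_defensive_alliance e S ->
  #|T| <= #|S| * ((max_degree e)./2 + 1).
Proof.
move=> e_sym /andP [all_def dom]; rewrite addn1.
exact: card_dominating e_sym dom (strong_defensive_alliance_out_le all_def).
Qed.

End Counting.

Theorem theorem4 (T : finType) (e : rel T) :
  simple_graph e -> 0 < #|T| ->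
  ceil_div (2 * #|T|) (max_degree e + 3) <= gamma_a e /\
  ceil_div #|T| ((max_degree e)./2 + 1) <= gamma_hat_a e.
Proof.
move=> [e_sym _] _; split; apply: leq_big_minn.
- by apply: leq_ceil_div; [rewrite addn3 | lia].
- move=> S alliance_S; apply: leq_ceil_div; first by rewrite addn3.
  exact: card_global_defensive_alliance.
- by apply: leq_ceil_div; [rewrite addn1 | lia].
- move=> S alliance_S; apply: leq_ceil_div; first by rewrite addn1.
  exact: card_global_strong_defensive_alliance.
Qed.
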